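(* Let $a,b,c,p,\lambda,n$ be real constants with $3a=pb$, $c\lambda=0$ and $(1+p/3)\lambda=2-n$, and set $\tilde\lambda=1-\frac{n+\lambda}{2}$ and $$\tilde L=\tfrac12(ru_r-\lambda u)u_t^2-\tfrac16(ru_r-3\lambda u)(c+bu^p)u_r^2 .$$ Then, identically (for every smooth positive function $u(t,r)$, $r>0$), $$r^{n-1}(ru_r-\lambda u)\Big(u_{tt}-(c+bu^p)\big(u_{rr}+\tfrac{n-1}{r}u_r\big)-\tfrac{pb}{3}u^{p-1}u_r^2\Big)=-E_u\big(r^{n-1}\tilde L\big)-(rD_r+\tilde\lambda)\big(r^{n-1}u_t^2\big),$$ where $E_u=\partial_u-D_r\partial_{u_r}-D_t\partial_{u_t}$ is the Euler–Lagrange operator. Moreover, if in addition $c=0$, $p=6(1-3/n)$ and $\lambda=-n/3$, then multiplying this identity by $u_t$ yields a conservation law $D_tT+D_rX=0$ of equation (A) with $a=pb/3$, whose multiplier is $r^{n-1}u_t(ru_r+\tfrac n3u)$.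
   Context: Equation (A) with $a=pb/3$ is $u_{tt}=(c+bu^{p})\big(u_{rr}+\frac{n-1}{r}u_{r}\big)+\tfrac{pb}{3}u^{p-1}u_{r}^{2}$. $D_t,D_r$ denote total derivatives. *)

From Stdlib Require Import Reals ClassicalEpsilon.
Open Scope R_scope.

Definition differentiable_at (f : R -> R) (x : R) : Prop :=
  exists l, derivable_pt_lim f x l.

(* The derivative of f at x (the unique l with derivable_pt_lim f x l
   whenever f is differentiable at x; an unspecified real otherwise). *)
Definition deriv (f : R -> R) (x : R) : R :=
  epsilon (inhabits 0) (fun l => derivable_pt_lim f x l).

(* For a function of (t, r) obtained by substituting
   u(t,r) and its derivatives into a differential function, the partial
   derivative of the composite is exactly the total derivative D_t / D_r. *)
Definition Dt (f : R -> R -> R) (t r : R) : R := deriv (fun s => f s r) t.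
Definition Dr (f : R -> R -> R) (t r : R) : R := deriv (fun s => f t s) r.

(* Regularity class for u(t,r) on r > 0: positive, all first and second
   partial derivatives exist, and the mixed partials agree (all implied by
   smoothness + positivity). *)
Definition smooth_pos (u : R -> R -> R) : Prop :=
  forall t r, 0 < r ->
    0 < u t r /\
    differentiable_at (fun s => u s r) t /\ differentiable_at (fun s => u t s) r /\
    differentiable_at (fun s => Dt u s r) t /\ differentiable_at (fun s => Dt u t s) r /\
    differentiable_at (fun s => Dr u s r) t /\ differentiable_at (fun s => Dr u t s) r /\
    Dr (Dt u) t r = Dt (Dr u) t r.

Definition euler_lagrange (F : R -> R -> R -> R -> R) (u : R -> R -> R)
    (t r : R) : R :=
  deriv (fun v => F r v (Dr u t r) (Dt u t r)) (u t r)
  - Dr (fun t r => deriv (fun w => F r (u t r) w (Dt u t r)) (Dr u t r)) t r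
  - Dt (fun t r => deriv (fun w => F r (u t r) (Dr u t r) w) (Dt u t r)) t r.

Definition Ltilde (b c p lam : R) (r u ur ut : R) : R :=
  / 2 * (r * ur - lam * u) * ut ^ 2
  - / 6 * (r * ur - 3 * lam * u) * (c + b * Rpower u p) * ur ^ 2.

Definition weightedL (b c p lam n : R) (r u ur ut : R) : R :=
  Rpower r (n - 1) * Ltilde b c p lam r u ur ut.

(* Left-hand side of equation (A) minus right-hand side, with a = p b / 3:
   u_tt - (c + b u^p)(u_rr + (n-1)/r u_r) - (p b/3) u^{p-1} u_r^2 *)
Definition eqA (b c p n : R) (u : R -> R -> R) (t r : R) : R :=
  Dt (Dt u) t r
  - (c + b * Rpower (u t r) p) * (Dr (Dr u) t r + (n - 1) / r * Dr u t r)
  - p * b / 3 * Rpower (u t r) (p - 1) * (Dr u t r) ^ 2.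

From Stdlib Require Import Reals.
From Stdlib Require Import ClassicalEpsilon FunctionalExtensionality Lra.
From Coquelicot Require Import Coquelicot.
Open Scope R_scope.

(* The main theorem combines the two parts; the hypothesis 3a = pb is
   already built into [eqA]. *)

Lemma deriv_of_is_derive (f : R -> R) (x l : R) :
  is_derive f x l -> deriv f x = l.
Proof.
  intro Hf; apply is_derive_Reals in Hf; unfold deriv.
  assert (Heps := epsilon_spec (inhabits 0)
                    (fun l => derivable_pt_lim f x l) (ex_intro _ l Hf)).
  exact (uniqueness_limite f x _ _ Heps Hf).
Qed.

Lemma is_derive_of_differentiable (f : R -> R) (x : R) :
  differentiable_at f x -> is_derive f x (deriv f x).
Proof.
  intros [l Hl]; apply is_derive_Reals in Hl.
  now rewrite (deriv_of_is_derive f x l Hl).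
Qed.

Lemma is_derive_Rpower (x y : R) :
  0 < x -> is_derive (fun x => Rpower x y) x (y * Rpower x y / x).
Proof.
  intro Hx; apply is_derive_Reals.
  replace (y * Rpower x y / x) with (y * Rpower x (y - 1)).
  - now apply derivable_pt_lim_power.
  - unfold Rminus; rewrite Rpower_plus, Rpower_Ropp, Rpower_1 by exact Hx.
    unfold Rdiv; ring.
Qed.

Lemma ex_derive_Rpower (x y : R) : 0 < x -> ex_derive (fun x => Rpower x y) x.
Proof. intro Hx; eexists; now apply is_derive_Rpower. Qed.

Lemma Derive_Rpower (x y : R) :
  0 < x -> Derive (fun x => Rpower x y) x = y * Rpower x y / x.
Proof. intro Hx; now apply is_derive_unique, is_derive_Rpower. Qed.

(* Lowering the exponent by one, used to put every power of r and u in the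
   two forms r^n and u^p. *)
Lemma Rpower_minus_one (x y : R) : 0 < x -> Rpower x (y - 1) = Rpower x y / x.
Proof.
  intro Hx; unfold Rminus; rewrite Rpower_plus, Rpower_Ropp, Rpower_1 by exact Hx.
  unfold Rdiv; ring.
Qed.

Lemma Dt_ext (f g : R -> R -> R) (t r : R) :
  (forall t r, f t r = g t r) -> Dt f t r = Dt g t r.
Proof. intro Hfg; unfold Dt; f_equal; apply functional_extensionality; auto. Qed.

Lemma Dr_ext (f g : R -> R -> R) (t r : R) :
  (forall t r, f t r = g t r) -> Dr f t r = Dr g t r.
Proof. intro Hfg; unfold Dr; f_equal; apply functional_extensionality; auto. Qed.

Lemma Dt_of_is_derive (f : R -> R -> R) (t r l : R) :
  is_derive (fun s : R => f s r) t l -> Dt f t r = l.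
Proof. apply deriv_of_is_derive. Qed.

Lemma Dr_of_is_derive (f : R -> R -> R) (t r l : R) :
  is_derive (fun s : R => f t s) r l -> Dr f t r = l.
Proof. apply deriv_of_is_derive. Qed.

Lemma smooth_pos_jet (u : R -> R -> R) (t r : R) :
  smooth_pos u -> 0 < r ->
  0 < u t r /\
  is_derive (fun s : R => u s r) t (Dt u t r) /\
  is_derive (fun s : R => u t s) r (Dr u t r) /\
  is_derive (fun s : R => Dt u s r) t (Dt (Dt u) t r) /\
  is_derive (fun s : R => Dt u t s) r (Dr (Dt u) t r) /\
  is_derive (fun s : R => Dr u s r) t (Dr (Dt u) t r) /\
  is_derive (fun s : R => Dr u t s) r (Dr (Dr u) t r).
Proof.
  intros Hu Hr.
  destruct (Hu t r Hr) as (Hpos & Hut & Hur & Hutt & Hutr & Hurt & Hurr & Hmix).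
  apply is_derive_of_differentiable in Hut, Hur, Hutt, Hutr, Hurt, Hurr.
  refine (conj Hpos (conj Hut (conj Hur (conj Hutt (conj Hutr (conj _ Hurr)))))).
  rewrite Hmix; exact Hurt.
Qed.

(* Closes the goal [is_derive F x ?l] produced when computing a total
   derivative of an expression in r, u and its first derivatives: the
   derivatives of the jet components are read off the hypotheses. *)
Ltac derive_along_jet :=
  auto_derive;
  [ repeat match goal with |- _ /\ _ => split end; try exact I;
    match goal with
    | H : is_derive ?f ?x _ |- ex_derive ?f ?x => exact (ex_intro _ _ H)
    | |- ex_derive (fun x => Rpower x _) _ => apply ex_derive_Rpower; assumption
    end
  | repeat match goal with
      H : is_derive _ _ _ |- _ => rewrite ?(is_derive_unique _ _ _ H); clear H
    end;
    rewrite ?Derive_Rpower by assumption;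
    reflexivity ].

Section WeightedLagrangian.
Variables (b c p lam n : R).

Lemma weightedL_d_ur (r v w z : R) :
  deriv (fun w => weightedL b c p lam n r v w z) w =
  Rpower r (n - 1) * (r / 2 * z ^ 2 - r / 6 * (c + b * Rpower v p) * w ^ 2
    - / 3 * (r * w - 3 * lam * v) * (c + b * Rpower v p) * w).
Proof.
  apply deriv_of_is_derive; unfold weightedL, Ltilde.
  auto_derive; [ exact I | field ].
Qed.

Lemma weightedL_d_ut (r v w z : R) :
  deriv (fun z => weightedL b c p lam n r v w z) z =
  Rpower r (n - 1) * ((r * w - lam * v) * z).
Proof.
  apply deriv_of_is_derive; unfold weightedL, Ltilde.
  auto_derive; [ exact I | field ].
Qed.

Lemma weightedL_d_u (r v w z : R) :
  0 < v ->
  deriv (fun v => weightedL b c p lam n r v w z) v =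
  Rpower r (n - 1) * (- lam / 2 * z ^ 2 + lam / 2 * (c + b * Rpower v p) * w ^ 2
    - / 6 * (r * w - 3 * lam * v) * (b * (p * Rpower v p / v)) * w ^ 2).
Proof.
  intro Hv; apply deriv_of_is_derive; unfold weightedL, Ltilde.
  auto_derive.
  - repeat split; now apply ex_derive_Rpower.
  - rewrite Derive_Rpower by exact Hv; field; lra.
Qed.

(* The conjugate momenta d(r^{n-1} L~)/du_r and d(r^{n-1} L~)/du_t along u. *)
Definition momentum_r (u : R -> R -> R) (t r : R) : R :=
  Rpower r (n - 1) * (r / 2 * (Dt u t r) ^ 2
    - r / 6 * (c + b * Rpower (u t r) p) * (Dr u t r) ^ 2
    - / 3 * (r * Dr u t r - 3 * lam * u t r) * (c + b * Rpower (u t r) p) * Dr u t r).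

Definition momentum_t (u : R -> R -> R) (t r : R) : R :=
  Rpower r (n - 1) * ((r * Dr u t r - lam * u t r) * Dt u t r).

Lemma euler_lagrange_weightedL (u : R -> R -> R) (t r : R) :
  0 < u t r ->
  euler_lagrange (weightedL b c p lam n) u t r =
  Rpower r (n - 1) * (- lam / 2 * (Dt u t r) ^ 2
      + lam / 2 * (c + b * Rpower (u t r) p) * (Dr u t r) ^ 2
      - / 6 * (r * Dr u t r - 3 * lam * u t r)
        * (b * (p * Rpower (u t r) p / u t r)) * (Dr u t r) ^ 2)
  - Dr (momentum_r u) t r - Dt (momentum_t u) t r.
Proof.
  intro Hpos; unfold euler_lagrange.
  rewrite weightedL_d_u by exact Hpos.
  rewrite (Dr_ext (fun t r => deriv (fun w => weightedL b c p lam n r (u t r) w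
      (Dt u t r)) (Dr u t r)) (momentum_r u)) by (intros; apply weightedL_d_ur).
  now rewrite (Dt_ext (fun t r => deriv (fun z => weightedL b c p lam n r (u t r)
      (Dr u t r) z) (Dt u t r)) (momentum_t u)) by (intros; apply weightedL_d_ut).
Qed.

End WeightedLagrangian.

Lemma multiplier_identity (b c p lam n : R)
  (Hc : c * lam = 0) (Hl : (1 + p / 3) * lam = 2 - n)
  (u : R -> R -> R) (Hu : smooth_pos u) (t r : R) (Hr : 0 < r) :
  Rpower r (n - 1) * (r * Dr u t r - lam * u t r) * eqA b c p n u t r
  = - euler_lagrange (weightedL b c p lam n) u t r
    - (r * Dr (fun t r => Rpower r (n - 1) * (Dt u t r) ^ 2) t r
       + (1 - (n + lam) / 2) * (Rpower r (n - 1) * (Dt u t r) ^ 2)).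
Proof.
  destruct (smooth_pos_jet u t r Hu Hr)
    as (Hpos & Hut & Hur & Hutt & Hutr & Hurt & Hurr).
  rewrite euler_lagrange_weightedL by exact Hpos.
  erewrite (Dr_of_is_derive (momentum_r b c p lam n u))
    by (unfold momentum_r; derive_along_jet).
  erewrite (Dt_of_is_derive (momentum_t lam n u))
    by (unfold momentum_t; derive_along_jet).
  erewrite (Dr_of_is_derive (fun t r => Rpower r (n - 1) * (Dt u t r) ^ 2))
    by derive_along_jet.
  unfold eqA; rewrite !Rpower_minus_one by assumption.
  assert (Hn : n = 2 - (1 + p / 3) * lam) by lra; subst n.
  destruct (Rmult_integral _ _ Hc) as [-> | ->]; field; lra.
Qed.

Definition density (b p n : R) (t r v vt vr : R) : R :=
  / 2 * vt ^ 2 * Rpower r (n - 1) * (r * vr + n / 3 * v)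
  + b / 6 * Rpower r (n - 1) * Rpower v p * vr ^ 2 * (r * vr + n * v).

Definition flux (b p n : R) (t r v vt vr : R) : R :=
  - Rpower r (n - 1) * r * vt ^ 3 / 6
  - b * Rpower r (n - 1) * Rpower v p * vt * vr * (r * vr / 2 + n * v / 3).

Lemma conservation_law (b p n : R)
  (Hn : n <> 0) (Hp : p = 6 * (1 - 3 / n))
  (u : R -> R -> R) (Hu : smooth_pos u) (t r : R) (Hr : 0 < r) :
  Rpower r (n - 1) * Dt u t r * (r * Dr u t r + n / 3 * u t r) * eqA b 0 p n u t r
  = Dt (fun t r => density b p n t r (u t r) (Dt u t r) (Dr u t r)) t r
    + Dr (fun t r => flux b p n t r (u t r) (Dt u t r) (Dr u t r)) t r.
Proof.
  destruct (smooth_pos_jet u t r Hu Hr)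
    as (Hpos & Hut & Hur & Hutt & Hutr & Hurt & Hurr).
  erewrite (Dt_of_is_derive (fun t r => density b p n t r (u t r) (Dt u t r) (Dr u t r)))
    by (unfold density; derive_along_jet).
  erewrite (Dr_of_is_derive (fun t r => flux b p n t r (u t r) (Dt u t r) (Dr u t r)))
    by (unfold flux; derive_along_jet).
  unfold eqA; rewrite !Rpower_minus_one by assumption.
  subst p; field; lra.
Qed.

Theorem mainTheorem9 (a b c p lam n : R)
  (Ha : 3 * a = p * b) (Hc : c * lam = 0) (Hl : (1 + p / 3) * lam = 2 - n) :
  (forall (u : R -> R -> R), smooth_pos u -> forall t r : R, 0 < r ->
     Rpower r (n - 1) * (r * Dr u t r - lam * u t r) * eqA b c p n u t r
     = - euler_lagrange (weightedL b c p lam n) u t r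
       - (r * Dr (fun t r => Rpower r (n - 1) * (Dt u t r) ^ 2) t r
          + (1 - (n + lam) / 2) * (Rpower r (n - 1) * (Dt u t r) ^ 2)))
  /\
  (c = 0 -> p = 6 * (1 - 3 / n) -> lam = - n / 3 ->
   exists T X : R -> R -> R -> R -> R -> R,
     forall (u : R -> R -> R), smooth_pos u -> forall t r : R, 0 < r ->
       Rpower r (n - 1) * Dt u t r * (r * Dr u t r + n / 3 * u t r)
         * eqA b c p n u t r
       = Dt (fun t r => T t r (u t r) (Dt u t r) (Dr u t r)) t r
         + Dr (fun t r => X t r (u t r) (Dt u t r) (Dr u t r)) t r).
Proof.
  split.
  - intros u Hu t r Hr; now apply multiplier_identity.
  - intros Hc0 Hp Hlam.
    (* n = 0 would force lam = 0, contradicting (1 + p/3) lam = 2 - n. *)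
    assert (Hn : n <> 0) by (intro Hn0; subst lam n; lra).
    exists (density b p n), (flux b p n); subst c.
    intros u Hu t r Hr; now apply conservation_law.
Qed.
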